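(* Let $\Gamma$ be the semigroup associated to an irreducible plane curve singularity, minimally generated by $r_0<\cdots<r_h$, with $h\ge 2$. Then $r_h\ge \frac13\left(5\cdot 2^{2h-1}-1\right)$.
   Context: A numerical semigroup is a submonoid of $(\mathbb N,+)$ with finite complement in $\mathbb N$; it has a unique minimal generating system. $\langle X\rangle$ is the submonoid generated by $X$. For an arrangement $(r_0,\ldots,r_h)$ of the minimal generators, set $d_k=\gcd(r_0,\ldots,r_{k-1})$ ($k=1,\ldots,h+1$) and $e_k=d_k/d_{k+1}$ ($k=1,\ldots,h$). A set $A$ of positive integers with nontrivial partition $A=A_1\cup A_2$ is the gluing of $A_1$ and $A_2$ if $\mathrm{lcm}(\gcd A_1,\gcd A_2)\in\langle A_1\rangle\cap\langle A_2\rangle$. $\Gamma$ is free for $(r_0,\ldots,r_h)$ if $h=0$, or $h\ge1$, $\{r_0,\ldots,r_h\}$ is the gluing of $\{r_0,\ldots,r_{h-1}\}$ and $\{r_h\}$, and $\langle r_0/d_h,\ldots,r_{h-1}/d_h\rangle$ is free for $(r_0/d_h,\ldots,r_{h-1}/d_h)$. $\Gamma$ is telescopic if it is free for the increasing arrangement $r_0<\cdots<r_h$. $\Gamma$ is the semigroup associated to an irreducible plane curve singularity if it is telescopic and $e_kr_k<r_{k+1}$ for all $k=1,\ldots,h-1$. *)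

From mathcomp Require Import all_boot.
Set Implicit Arguments. Unset Strict Implicit. Unset Printing Implicit Defensive.

Definition in_monoid (A : seq nat) (n : nat) : Prop :=
  exists c : nat -> nat, n = \sum_(i < size A) c i * nth 0 A i.

Definition gcd_seq (A : seq nat) : nat := foldr gcdn 0 A.

Definition numerical_semigroup (G : nat -> Prop) : Prop :=
  G 0 /\ (forall a b, G a -> G b -> G (a + b)) /\
  (exists N, forall n, N <= n -> G n).

Definition minimal_generating_system (G : nat -> Prop) (r : seq nat) : Prop :=
  uniq r /\ (forall n, G n <-> in_monoid r n) /\
  (forall i, i < size r ->
     0 < nth 0 r i /\ ~ in_monoid (rem (nth 0 r i) r) (nth 0 r i)).

Definition dk (r : seq nat) (k : nat) : nat := gcd_seq (take k r).
Definition ek (r : seq nat) (k : nat) : nat := dk r k %/ dk r k.+1.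

Definition gluing (A1 A2 : seq nat) : Prop :=
  A1 != [::] /\ A2 != [::] /\
  in_monoid A1 (lcmn (gcd_seq A1) (gcd_seq A2)) /\
  in_monoid A2 (lcmn (gcd_seq A1) (gcd_seq A2)).

Fixpoint free_rec (h : nat) (s : seq nat) : Prop :=
  match h with
  | 0 => True
  | h'.+1 =>
      gluing (take h s) [:: nth 0 s h] /\
      free_rec h' (map (fun x => x %/ dk s h) (take h s))
  end.

Definition free_for (r : seq nat) : Prop := free_rec (size r).-1 r.

Definition telescopic (r : seq nat) : Prop := sorted ltn r /\ free_for r.

Definition plane_curve_semigroup (r : seq nat) : Prop :=
  telescopic r /\
  (forall k, 1 <= k -> k <= (size r).-1 - 1 ->
     ek r k * nth 0 r k < nth 0 r k.+1).

From mathcomp Require Import all_boot.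
From mathcomp Require Import zify.

Set Implicit Arguments.
Unset Strict Implicit.
Unset Printing Implicit Defensive.

(* Write d_k = e_k d_{k+1}.  Minimality of the generators together with the
   gluing condition forces e_k >= 2, since e_k = 1 would put r_k itself,
   equal to lcm(d_k, r_k), in <r_0, ..., r_{k-1}>.  As d_{k+2} divides both
   e_k r_k and r_{k+1}, the condition e_k r_k < r_{k+1} sharpens to
   r_{k+1} >= e_k r_k + d_{k+2}; likewise r_1 >= r_0 + d_2.  Hence
   x_k := r_k / d_{k+1} satisfies x_1 >= e_1 + 1 >= 3 and
   x_{k+1} >= e_k e_{k+1} x_k + 1 >= 4 x_k + 1, so 3 x_k + 1 >= 10 * 4^(k-1),
   and r_h >= x_h gives the bound. *)

Lemma in_monoid_catr A B n : in_monoid A n -> in_monoid (A ++ B) n.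
Proof.
case=> c ->; exists (fun i => if i < size A then c i else 0).
rewrite size_cat big_split_ord /= [X in _ = _ + X]big1 ?addn0; last first.
  by move=> i _; rewrite ltnNge leq_addr mul0n.
by apply: eq_bigr => i _; rewrite /= ltn_ord nth_cat ltn_ord.
Qed.

Lemma in_monoid_muln A d n :
  in_monoid A n -> in_monoid (map (muln^~ d) A) (n * d).
Proof.
case=> c ->; exists c; rewrite size_map big_distrl /=.
by apply: eq_bigr => i _; rewrite (nth_map 0) // mulnA.
Qed.

Lemma in_monoid_divn A d n :
  all (dvdn d) A -> in_monoid (map (divn^~ d) A) n -> in_monoid A (n * d).
Proof.
move=> dA /(in_monoid_muln d); rewrite -map_comp map_id_in // => x /(allP dA).
exact: divnK.
Qed.

Lemma gcd_seq_dvdn A x : x \in A -> gcd_seq A %| x.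
Proof.
elim: A => //= y A IH; rewrite inE => /predU1P[-> | /IH]; first exact: dvdn_gcdl.
exact/dvdn_trans/dvdn_gcdr.
Qed.

Lemma gcd_seq_map_divn A d :
  all (dvdn d) A -> gcd_seq (map (divn^~ d) A) * d = gcd_seq A.
Proof.
elim: A => //= x A IH /andP[dx /IH dA].
by rewrite muln_gcdl dA divnK.
Qed.

Lemma gcd_seq_rcons A x : gcd_seq (rcons A x) = gcdn (gcd_seq A) x.
Proof.
elim: A => /= [|y A ->]; first by rewrite gcdn0 gcd0n.
by rewrite gcdnA.
Qed.

Lemma dkS s k : k < size s -> dk s k.+1 = gcdn (dk s k) (nth 0 s k).
Proof. by move=> lt_ks; rewrite /dk (take_nth 0 lt_ks) gcd_seq_rcons. Qed.

Lemma free_rec_gluing h s : size s = h.+1 -> free_rec h s ->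
  forall k, 0 < k <= h -> in_monoid (take k s) (lcmn (dk s k) (nth 0 s k)).
Proof.
elim: h s => [|h IH] s s_size /=; first by move=> _ [].
case=> [[_ [_ [glue _]]] free] k /andP[k_gt0 le_kh1].
have [lt_kh1 | ge_kh1] := ltnP k h.+1; last first.
  have -> : k = h.+1 by apply/eqP; rewrite eqn_leq le_kh1.
  by rewrite /gcd_seq /= gcdn0 in glue.
set d := dk s h.+1 in free; set t := take h.+1 s in free.
have d_t : all (dvdn d) t by apply/allP => x; apply: gcd_seq_dvdn.
have t_size : size t = h.+1 by rewrite size_take s_size ltnSn.
have take_t : take k t = take k s by rewrite take_takel // ltnW.
have d_k : all (dvdn d) (take k s).
  by apply/allP => x; rewrite -take_t => /mem_take; apply/allP.
have lt_kt : k < size t by rewrite t_size.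
have := IH _ _ free k; rewrite size_map t_size k_gt0 -ltnS lt_kh1.
move=> /(_ erefl erefl); rewrite /dk -map_take take_t => /(in_monoid_divn d_k).
rewrite muln_lcml gcd_seq_map_divn // (nth_map 0) // divnK; last first.
  exact/(allP d_t)/mem_nth.
by rewrite nth_take.
Qed.

Lemma dvdn_ltn_add_leq a b d : a < b -> d %| a -> d %| b -> a + d <= b.
Proof.
move=> lt_ab da db; have /dvdn_leq : d %| b - a by rewrite dvdn_sub.
by rewrite subn_gt0 lt_ab => /(_ isT); lia.
Qed.

Section PlaneCurveGenerators.

Variables (h : nat) (r : seq nat).
Hypothesis r_size : size r = h.+1.
Hypothesis r_uniq : uniq r.
Hypothesis r_minimal : forall k, k < size r ->
  0 < nth 0 r k /\ ~ in_monoid (rem (nth 0 r k) r) (nth 0 r k).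
Hypothesis r_sorted : sorted ltn r.
Hypothesis r_free : free_rec h r.
Hypothesis r_plane : forall k, 0 < k < h -> ek r k * nth 0 r k < nth 0 r k.+1.

Lemma dk_gt0 k : 0 < k -> 0 < dk r k.
Proof.
have [|r0_gt0 _] := r_minimal (k := 0); first by rewrite r_size.
move=> k_gt0; apply: dvdn_gt0 r0_gt0 _; apply: gcd_seq_dvdn.
by rewrite -(nth_take 0 k_gt0) mem_nth // size_take_min r_size leq_min k_gt0.
Qed.

Lemma dk1 : dk r 1 = nth 0 r 0.
Proof. by rewrite dkS ?r_size // /dk take0 gcd0n. Qed.

Lemma dvdn_dkS k : k <= h -> dk r k.+1 %| dk r k.
Proof. by move=> le_kh; rewrite dkS ?r_size // dvdn_gcdl. Qed.

Lemma dvdn_dkS_nth k : k <= h -> dk r k.+1 %| nth 0 r k.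
Proof. by move=> le_kh; rewrite dkS ?r_size // dvdn_gcdr. Qed.

Lemma dk_ek k : k <= h -> dk r k = ek r k * dk r k.+1.
Proof. by move=> le_kh; rewrite /ek divnK // dvdn_dkS. Qed.

Lemma ek_gt1 k : 0 < k <= h -> 1 < ek r k.
Proof.
case/andP=> k_gt0 le_kh; have := dk_ek le_kh.
case: (ek r k) => [|[|//]] dk_eq.
  by have := dk_gt0 k_gt0; rewrite dk_eq.
rewrite mul1n in dk_eq; case: (r_minimal (k := k)) => [|_ []]; first by rewrite r_size.
rewrite remE index_uniq // ?r_size //; apply: in_monoid_catr.
have /lcmn_idPr <- : dk r k %| nth 0 r k by rewrite dk_eq dvdn_dkS_nth.
by apply: (free_rec_gluing r_size r_free); rewrite k_gt0.
Qed.

Lemma nth1_lbound : 0 < h -> 3 * dk r 2 <= nth 0 r 1.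
Proof.
move=> h_gt0; have lt_r01 : nth 0 r 0 < nth 0 r 1.
  by apply: (sorted_ltn_nth ltn_trans) => //; rewrite inE r_size.
have dk2_r0 : dk r 2 %| nth 0 r 0 by rewrite -dk1 dvdn_dkS.
have := dvdn_ltn_add_leq lt_r01 dk2_r0 (dvdn_dkS_nth h_gt0).
rewrite -dk1 (dk_ek h_gt0); have := ek_gt1 (k := 1) h_gt0; nia.
Qed.

Lemma nthS_lbound k : 0 < k < h -> ek r k * nth 0 r k + dk r k.+2 <= nth 0 r k.+1.
Proof.
case/andP=> k_gt0 lt_kh; apply: dvdn_ltn_add_leq; first by rewrite r_plane ?k_gt0.
  by rewrite dvdn_mull // (dvdn_trans (dvdn_dkS lt_kh)) // dvdn_dkS_nth // ltnW.
exact: dvdn_dkS_nth.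
Qed.

Lemma nth_growth k : k < h -> 10 * 4 ^ k * dk r k.+2 <= 3 * nth 0 r k.+1 + dk r k.+2.
Proof.
elim: k => [h_gt0 | k IH lt_k1h].
  by have := nth1_lbound h_gt0; lia.
(* r_{k+2} >= 2 r_{k+1} + d_{k+3} and d_{k+2} >= 2 d_{k+3} quadruple the bound. *)
have := IH (ltnW lt_k1h); have := nthS_lbound (k := k.+1) lt_k1h.
have := dk_ek lt_k1h; have := ek_gt1 (k := k.+1) (ltnW lt_k1h).
have := ek_gt1 (k := k.+2) lt_k1h.
rewrite expnS; have : 0 < 4 ^ k by rewrite expn_gt0.
nia.
Qed.

End PlaneCurveGenerators.

Theorem proposition5p1 (G : nat -> Prop) (r : seq nat) :
  numerical_semigroup G ->
  minimal_generating_system G r ->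
  sorted ltn r ->
  plane_curve_semigroup r ->
  2 <= (size r).-1 ->
  5 * 2 ^ (2 * (size r).-1 - 1) - 1 <= 3 * nth 0 r (size r).-1.
Proof.
move=> _ [r_uniq [_ r_minimal]] r_sorted [[_ r_free] r_plane].
rewrite /free_for in r_free; set h := (size r).-1 in r_free r_plane * => h_ge2.
have r_size : size r = h.+1 by move: h_ge2; rewrite /h; case: (size r).
have r_plane' k : 0 < k < h -> ek r k * nth 0 r k < nth 0 r k.+1.
  by case/andP=> k_gt0 lt_kh; apply: r_plane; lia.
have := nth_growth r_size r_uniq r_minimal r_sorted r_free r_plane' (k := h.-1).
have := dk_gt0 r_size r_minimal (ltn0Sn h).
have -> : 5 * 2 ^ (2 * h - 1) = 10 * 4 ^ h.-1.
  by case: (h) h_ge2 => // n _; rewrite mulnS subSS subn0 expnS expnM mulnA.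
by rewrite prednK ?(ltnW h_ge2) //; nia.
Qed.
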